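(* Consider the following algorithm (SeqPolyPA) for polynomial preferential attachment with exponent $\alpha>0$ and one host per new node. It maintains a list $P$ (the proposal list) of nodes, in which a node may occur several times; for a node $v$ let $c(v)$ be the number of occurrences of $v$ in $P$ and $w(v)=\deg(v)^\alpha/c(v)$. Initially $P$ contains each seed node $v$ exactly $\lceil \deg_0(v)^\alpha n_0/W_0\rceil$ times. To attach the $i$-th new node $v_{n_0+i}$ to the current graph $G_{i-1}$, the algorithm repeatedly selects a candidate $h$ uniformly at random among the positions of $P$ and accepts it with probability $w(h)/\max_{v\in V_{i-1}} w(v)$ (all quantities taken with respect to $G_{i-1}$ and the current $P$), until a candidate is accepted. Then it adds $v_{n_0+i}$ and the edge $\{v_{n_0+i},h\}$ to the graph, appends $v_{n_0+i}$ once to $P$, and afterwards appends $h$ to $P$ repeatedly as long as $w(h)>W_i/n_i$ (with respect to $G_i$). Then, in every step, SeqPolyPA selects each node $h$ of the current graph $G$ as host with probability $\deg(h)^\alpha/W$, where $W=\sum_{v\in V(G)}\deg(v)^\alpha$.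
   Context: Preferential attachment model: start from a seed graph $G_0=(V_0,E_0)$ with $n_0$ nodes and $m_0$ edges; iteratively add $N$ new nodes $v_{n_0+1},\dots,v_{n_0+N}$, each connected to earlier nodes (''hosts''); here each new node receives one host. $G_i=(V_i,E_i)$ denotes the graph after $i$ new nodes were added, $n_i=n_0+i$, $\deg_i(v)$ is the degree of $v$ in $G_i$, and $W_i=\sum_{v\in V_i}\deg_i(v)^\alpha$ (assumed positive). In polynomial preferential attachment the host $h$ is chosen with probability proportional to $\deg(h)^\alpha$. *)

From Stdlib Require Import Reals List Arith.
From Coquelicot Require Import Coquelicot.
Import ListNotations.
Open Scope R_scope.

(* Nodes are natural numbers; a graph with n nodes has node set {0,..,n-1}.
   Edges are unordered pairs stored as ordered pairs; multi-edges allowed. *)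
Record state := mkState {
  st_n : nat;
  st_E : list (nat * nat);
  st_P : list nat
}.

Definition deg (E : list (nat * nat)) (v : nat) : nat :=
  fold_right (fun e acc =>
    (acc + (if Nat.eqb (fst e) v then 1 else 0)
         + (if Nat.eqb (snd e) v then 1 else 0))%nat) 0%nat E.

Definition dpow (alpha : R) (d : nat) : R :=
  if Nat.eqb d 0 then 0 else Rpower (INR d) alpha.

Definition sumR (l : list R) : R := fold_right Rplus 0 l.

Definition Wt (alpha : R) (s : state) : R :=
  sumR (map (fun v => dpow alpha (deg (st_E s) v)) (seq 0 (st_n s))).

Definition cnt (P : list nat) (v : nat) : nat := count_occ Nat.eq_dec P v.

Definition wgt (alpha : R) (s : state) (v : nat) : R :=
  dpow alpha (deg (st_E s) v) / INR (cnt (st_P s) v).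

Definition wmax (alpha : R) (s : state) : R :=
  fold_right Rmax 0 (map (wgt alpha s) (seq 0 (st_n s))).

(* One trial of the rejection sampler: a uniformly random position of P is
   drawn and its node h is accepted with probability w(h)/wmax.
   Probability that a single trial draws and accepts h: *)
Definition accept_prob (alpha : R) (s : state) (h : nat) : R :=
  INR (cnt (st_P s) h) / INR (length (st_P s)) * (wgt alpha s h / wmax alpha s).

Definition reject_prob (alpha : R) (s : state) : R :=
  1 - sumR (map (fun x => wgt alpha s x / wmax alpha s) (st_P s))
        / INR (length (st_P s)).

(* Initial proposal list: each seed node v appears exactly
   ceil(deg_0(v)^alpha * n0 / W0) times (order in P is irrelevant). *)
Definition init_P_ok (alpha : R) (s : state) : Prop :=
  (forall x, In x (st_P s) -> (x < st_n s)%nat) /\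
  forall v, (v < st_n s)%nat ->
    let x := dpow alpha (deg (st_E s) v) * INR (st_n s) / Wt alpha s in
    INR (cnt (st_P s) v) - 1 < x /\ x <= INR (cnt (st_P s) v).

(* One step of SeqPolyPA, given the host h returned by the sampler:
   add node n and edge {n,h}, append n once to P, then append h exactly k
   times where k is the number of iterations of the loop
   "while w(h) > W_i/n_i, append h to P" (w, W, n w.r.t. the new graph). *)
Definition step (alpha : R) (s : state) (h : nat) (k : nat) (s' : state) : Prop :=
  let E' := (st_n s, h) :: st_E s in
  let n' := S (st_n s) in
  let c := cnt (st_P s ++ [st_n s]) h in
  let g := mkState n' E' (st_P s) in
  let d := dpow alpha (deg E' h) in
  (forall j, (j < k)%nat -> d / INR (c + j) > Wt alpha g / INR n') /\
  d / INR (c + k) <= Wt alpha g / INR n' /\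
  s' = mkState n' E' (st_P s ++ [st_n s] ++ repeat h k).

(* States reachable after i insertions, along histories of positive
   probability (each host has positive probability of being accepted
   in a single trial). *)
Inductive reachable (alpha : R) (n0 : nat) (E0 : list (nat * nat))
  : nat -> state -> Prop :=
| reach0 : forall P0, init_P_ok alpha (mkState n0 E0 P0) ->
    reachable alpha n0 E0 0 (mkState n0 E0 P0)
| reachS : forall i s h k s', reachable alpha n0 E0 i s ->
    (h < st_n s)%nat -> 0 < accept_prob alpha s h ->
    step alpha s h k s' -> reachable alpha n0 E0 (S i) s'.

From Stdlib Require Import Reals List Arith Lra Lia.
From Coquelicot Require Import Coquelicot.
Open Scope R_scope.

(* A single trial selects a position of P uniformly and accepts its node h
   with probability w(h)/wmax, so it returns h with probability
   c(h) w(h) / (|P| wmax) = deg(h)^alpha / (|P| wmax), and it succeeds at all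
   with probability W / (|P| wmax), because the copies of each node v in P
   carry total weight c(v) w(v) = deg(v)^alpha.  Summing the geometric series
   over the number of rejected trials gives deg(h)^alpha / W.  The only thing
   to maintain along the algorithm is that every node of positive degree
   occurs in P (otherwise c(v) w(v) = 0 by the convention x/0 = 0). *)

Lemma sumR_app (l1 l2 : list R) : sumR (l1 ++ l2) = sumR l1 + sumR l2.
Proof. induction l1 as [|x l1 IH]; simpl; [ring | rewrite IH; ring]. Qed.

Lemma sumR_map_plus {A : Type} (f g : A -> R) (l : list A) :
  sumR (map (fun x => f x + g x) l) = sumR (map f l) + sumR (map g l).
Proof. induction l as [|x l IH]; simpl; [ring | rewrite IH; ring]. Qed.

Lemma sumR_map_div {A : Type} (f : A -> R) (c : R) (l : list A) :
  sumR (map (fun x => f x / c) l) = sumR (map f l) / c.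
Proof. induction l as [|x l IH]; simpl; unfold Rdiv in *; [ring | rewrite IH; ring]. Qed.

Lemma sumR_map_le {A : Type} (f : A -> R) (M : R) (l : list A) :
  (forall x, In x l -> f x <= M) -> sumR (map f l) <= INR (length l) * M.
Proof.
  induction l as [|x l IH]; intros Hle; [simpl; lra |].
  change (f x + sumR (map f l) <= INR (S (length l)) * M); rewrite S_INR.
  assert (f x <= M) by (apply Hle; left; reflexivity).
  assert (sumR (map f l) <= INR (length l) * M) by (apply IH; intros; apply Hle; right; assumption).
  lra.
Qed.

Lemma sumR_ge0 (l : list R) : (forall y, In y l -> 0 <= y) -> 0 <= sumR l.
Proof.
  induction l as [|y l IH]; intros Hge; simpl; [lra |].
  assert (0 <= y) by (apply Hge; left; reflexivity).
  assert (0 <= sumR l) by (apply IH; intros; apply Hge; right; assumption).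
  lra.
Qed.

Lemma sumR_ge_member (l : list R) (x : R) :
  (forall y, In y l -> 0 <= y) -> In x l -> x <= sumR l.
Proof.
  induction l as [|y l IH]; intros Hge Hx; simpl; [contradiction |].
  assert (0 <= y) by (apply Hge; left; reflexivity).
  assert (0 <= sumR l) by (apply sumR_ge0; intros; apply Hge; right; assumption).
  destruct Hx as [<- | Hx]; [lra |].
  assert (x <= sumR l) by (apply IH; auto; intros; apply Hge; right; assumption).
  lra.
Qed.

Lemma sumR_seq_indicator (f : nat -> R) (a n : nat) :
  sumR (map (fun v => if Nat.eqb a v then f v else 0) (seq 0 n)) =
  if Nat.ltb a n then f a else 0.
Proof.
  induction n as [|n IH]; [destruct (Nat.ltb_spec a 0); [lia | reflexivity] |].
  rewrite seq_S, map_app, sumR_app, IH; simpl.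
  destruct (Nat.ltb_spec a n), (Nat.eqb_spec a n), (Nat.ltb_spec a (S n));
    subst; try lia; ring.
Qed.

Lemma sumR_map_count (f : nat -> R) (n : nat) (P : list nat) :
  (forall x, In x P -> (x < n)%nat) ->
  sumR (map f P) = sumR (map (fun v => INR (cnt P v) * f v) (seq 0 n)).
Proof.
  induction P as [|a P IH]; intros HP; simpl.
  - induction (seq 0 n) as [|v l IHl]; simpl; [reflexivity | rewrite <- IHl; ring].
  - rewrite (map_ext (fun v => INR (cnt (a :: P) v) * f v)
                     (fun v => (if Nat.eqb a v then f v else 0) + INR (cnt P v) * f v)).
    + rewrite sumR_map_plus, sumR_seq_indicator, <- IH by (intros; apply HP; right; assumption).
      assert (a < n)%nat by (apply HP; left; reflexivity).
      destruct (Nat.ltb_spec a n); [ring | lia].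
    + intros v; unfold cnt; simpl.
      destruct (Nat.eq_dec a v), (Nat.eqb_spec a v); try congruence;
        try rewrite S_INR; ring.
Qed.

Lemma fold_right_Rmax_ge (l : list R) (x : R) : In x l -> x <= fold_right Rmax 0 l.
Proof.
  induction l as [|y l IH]; simpl; [tauto |].
  intros [<- | Hx]; [apply Rmax_l |].
  eapply Rle_trans; [apply IH, Hx | apply Rmax_r].
Qed.

Lemma dpow_ge0 (alpha : R) (d : nat) : 0 <= dpow alpha d.
Proof.
  unfold dpow; destruct (Nat.eqb_spec d 0); [lra |].
  left; apply exp_pos.
Qed.

Lemma dpow_gt0 (alpha : R) (d : nat) : d <> 0%nat -> 0 < dpow alpha d.
Proof.
  unfold dpow; destruct (Nat.eqb_spec d 0); [contradiction |].
  intros _; apply exp_pos.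
Qed.

Lemma Wt_gt0 (alpha : R) (s : state) (v : nat) :
  (v < st_n s)%nat -> deg (st_E s) v <> 0%nat -> 0 < Wt alpha s.
Proof.
  intros Hv Hd.
  apply Rlt_le_trans with (dpow alpha (deg (st_E s) v)); [apply dpow_gt0, Hd |].
  apply sumR_ge_member.
  - intros y Hy; apply in_map_iff in Hy as [u [<- _]]; cbv beta; apply dpow_ge0.
  - apply (in_map (fun u => dpow alpha (deg (st_E s) u))), in_seq; lia.
Qed.

Lemma cnt_app (P Q : list nat) (v : nat) : cnt (P ++ Q) v = (cnt P v + cnt Q v)%nat.
Proof. apply count_occ_app. Qed.

Definition state_inv (alpha : R) (s : state) : Prop :=
  (forall x, In x (st_P s) -> (x < st_n s)%nat) /\
  (forall v, (v < st_n s)%nat -> deg (st_E s) v <> 0%nat -> cnt (st_P s) v <> 0%nat) /\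
  0 < Wt alpha s.

Lemma init_P_ok_state_inv (alpha : R) (n0 : nat) (E0 : list (nat * nat)) (P0 : list nat) :
  0 < Wt alpha (mkState n0 E0 nil) ->
  init_P_ok alpha (mkState n0 E0 P0) -> state_inv alpha (mkState n0 E0 P0).
Proof.
  intros HW [HP Hc]; split; [exact HP |]; split; [| exact HW].
  simpl in *; intros v Hv Hd H0.
  destruct (Hc v Hv) as [_ Hle]; rewrite H0 in Hle; simpl in Hle.
  assert (0 < dpow alpha (deg E0 v)) by (apply dpow_gt0, Hd).
  assert (0 < INR n0) by (apply lt_0_INR; lia).
  assert (0 < dpow alpha (deg E0 v) * INR n0 / Wt alpha (mkState n0 E0 nil))
    by (apply Rdiv_lt_0_compat; [nra | exact HW]).
  change (Wt alpha (mkState n0 E0 P0)) with (Wt alpha (mkState n0 E0 nil)) in Hle.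
  lra.
Qed.

Lemma accept_prob_gt0_cnt (alpha : R) (s : state) (h : nat) :
  0 < accept_prob alpha s h -> cnt (st_P s) h <> 0%nat.
Proof.
  unfold accept_prob; intros Hacc Hc; rewrite Hc in Hacc; simpl in Hacc.
  unfold Rdiv in Hacc; rewrite !Rmult_0_l in Hacc; lra.
Qed.

Lemma step_state_inv (alpha : R) (s s' : state) (h k : nat) :
  state_inv alpha s -> cnt (st_P s) h <> 0%nat ->
  step alpha s h k s' -> state_inv alpha s'.
Proof.
  intros [HP [Hc _]] Hch [_ [_ ->]].
  destruct s as [n E P]; simpl in *.
  assert (Hdeg_new : deg ((n, h) :: E) n <> 0%nat) by (simpl; rewrite Nat.eqb_refl; lia).
  split; [| split]; simpl.
  - intros x Hx; apply in_app_iff in Hx as [Hx | [<- | Hx]].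
    + specialize (HP x Hx); lia.
    + lia.
    + apply repeat_spec in Hx as ->.
      assert (Hh : In h P) by (apply (count_occ_In Nat.eq_dec); unfold cnt in Hch; lia).
      specialize (HP h Hh); lia.
  - intros v Hv; rewrite !cnt_app.
    destruct (Nat.eqb_spec n v) as [<- | Hnv].
    + unfold cnt; simpl; destruct (Nat.eq_dec n n); [lia | congruence].
    + destruct (Nat.eqb_spec h v) as [<- | Hhv]; [lia |].
      intros Hd; specialize (Hc v ltac:(lia) ltac:(lia)); lia.
  - apply (Wt_gt0 alpha (mkState (S n) ((n, h) :: E) _) n); simpl; [lia | exact Hdeg_new].
Qed.

Lemma reachable_state_inv (alpha : R) (n0 : nat) (E0 : list (nat * nat)) (i : nat) (s : state) :
  0 < Wt alpha (mkState n0 E0 nil) -> reachable alpha n0 E0 i s -> state_inv alpha s.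
Proof.
  intros HW Hr; induction Hr as [P0 Hok | i s h k s' _ IH _ Hacc Hstep].
  - exact (init_P_ok_state_inv alpha n0 E0 P0 HW Hok).
  - exact (step_state_inv alpha s s' h k IH (accept_prob_gt0_cnt alpha s h Hacc) Hstep).
Qed.

Section Sampler.

Variables (alpha : R) (s : state).
Hypothesis Hinv : state_inv alpha s.

Let m : R := INR (length (st_P s)).
Let M : R := wmax alpha s.

Lemma cnt_mul_wgt (v : nat) :
  (v < st_n s)%nat -> INR (cnt (st_P s) v) * wgt alpha s v = dpow alpha (deg (st_E s) v).
Proof.
  destruct Hinv as [_ [Hc _]]; intros Hv; unfold wgt.
  destruct (Nat.eqb_spec (cnt (st_P s) v) 0) as [H0 | H0].
  - destruct (Nat.eqb_spec (deg (st_E s) v) 0) as [Hd | Hd].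
    + rewrite H0, Hd; unfold dpow; simpl; ring.
    + exfalso; exact (Hc v Hv Hd H0).
  - field; apply not_0_INR, H0.
Qed.

Lemma sumR_wgt_P : sumR (map (wgt alpha s) (st_P s)) = Wt alpha s.
Proof.
  destruct Hinv as [HP _].
  rewrite (sumR_map_count _ (st_n s)) by exact HP; unfold Wt.
  f_equal; apply map_ext_in; intros v Hv; apply in_seq in Hv.
  apply cnt_mul_wgt; lia.
Qed.

Lemma Wt_le_length_wmax : Wt alpha s <= m * M.
Proof.
  destruct Hinv as [HP _].
  rewrite <- sumR_wgt_P; apply sumR_map_le; intros x Hx.
  apply fold_right_Rmax_ge, in_map, in_seq; specialize (HP x Hx); lia.
Qed.

Lemma length_wmax_neq0 : m <> 0 /\ M <> 0.
Proof.
  destruct Hinv as [_ [_ HW]]; pose proof Wt_le_length_wmax.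
  split; intros H0; rewrite H0 in *; lra.
Qed.

Lemma accept_probE (h : nat) :
  (h < st_n s)%nat -> accept_prob alpha s h = dpow alpha (deg (st_E s) h) / (m * M).
Proof.
  intros Hh; pose proof length_wmax_neq0.
  unfold accept_prob; rewrite <- (cnt_mul_wgt h Hh); fold m M; field; tauto.
Qed.

Lemma reject_probE : reject_prob alpha s = 1 - Wt alpha s / (m * M).
Proof.
  pose proof length_wmax_neq0.
  unfold reject_prob; rewrite sumR_map_div, sumR_wgt_P; fold m M; field; tauto.
Qed.

End Sampler.

Lemma is_series_geom_ratio (a p b : R) :
  0 < p <= b -> is_series (fun k => (1 - p / b) ^ k * (a / b)) (a / p).
Proof.
  intros Hpb.
  assert (Hq : 0 < p / b <= 1).
  { split; [apply Rdiv_lt_0_compat; lra |].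
    apply Rmult_le_reg_r with b; [lra |].
    unfold Rdiv; rewrite Rmult_assoc, Rinv_l; lra. }
  assert (Habs : Rabs (1 - p / b) < 1) by (rewrite Rabs_pos_eq; lra).
  replace (a / p) with (/ (1 - (1 - p / b)) * (a / b)) by (field; lra).
  exact (is_series_scal_r _ _ _ (is_series_geom _ Habs)).
Qed.

Theorem theorem1 (alpha : R) (n0 : nat) (E0 : list (nat * nat)) :
  0 < alpha ->
  (forall e, In e E0 -> (fst e < n0)%nat /\ (snd e < n0)%nat) ->
  0 < Wt alpha (mkState n0 E0 nil) ->
  forall (i : nat) (s : state), reachable alpha n0 E0 i s ->
  forall h : nat, (h < st_n s)%nat ->
    is_series (fun k => reject_prob alpha s ^ k * accept_prob alpha s h)
              (dpow alpha (deg (st_E s) h) / Wt alpha s).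
Proof.
  intros _ _ HW0 i s Hr h Hh.
  pose proof (reachable_state_inv alpha n0 E0 i s HW0 Hr) as Hinv.
  rewrite (accept_probE alpha s Hinv h Hh), (reject_probE alpha s Hinv).
  apply is_series_geom_ratio; split.
  - apply Hinv.
  - apply Wt_le_length_wmax, Hinv.
Qed.
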